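(* Let $L$ be a finite, bounded, simple, relatively complemented lattice. Then every tolerance on $L$ is transitive (hence a congruence), the only tolerances on $L$ are $\mathrm{id}_L$ and $L^2$, and consequently $\mathsf{C}(L)=\mathsf{Pol}_{0,1}(L)$.
   Context: A tolerance on $L$ is a reflexive, symmetric binary relation $T$ such that $(a,b),(c,d)\in T$ imply $(a\vee c,b\vee d),(a\wedge c,b\wedge d)\in T$; a congruence is a transitive tolerance. $L$ is simple if its only congruences are $\mathrm{id}_L=\{(x,x):x\in L\}$ and $L^2$. $L$ is relatively complemented if for every $a\le b$ and every $x\in[a,b]$ there is $y\in[a,b]$ with $x\wedge y=a$, $x\vee y=b$. An $n$-ary aggregation function on $L$ ($n\ge1$) is a nondecreasing map $A:L^n\to L$ with $A(0,\dots,0)=0$, $A(1,\dots,1)=1$; $\mathsf{C}(L)$ is the set of all of them. Polynomials on $L$ are functions $L^n\to L$ built from projections and constants by finitely many pointwise joins and meets; $\mathsf{Pol}_{0,1}(L)$ is the set of polynomials preserving $0$ and $1$. *)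

From HB Require Import structures.
From mathcomp Require Import all_boot all_order.
Set Implicit Arguments. Unset Strict Implicit. Unset Printing Implicit Defensive.
Import Order.TTheory.
Local Open Scope order_scope.

Section LatticeDefs.
Context {disp : Order.disp_t} {L : finTBLatticeType disp}.

Definition tolerance (T : L -> L -> Prop) : Prop :=
  [/\ (forall x, T x x),
      (forall x y, T x y -> T y x) &
      (forall a b c d : L, T a b -> T c d -> T (a `|` c) (b `|` d) /\ T (a `&` c) (b `&` d))].

Definition transitive_rel (T : L -> L -> Prop) : Prop :=
  forall x y z, T x y -> T y z -> T x z.

Definition congruence (T : L -> L -> Prop) : Prop :=
  tolerance T /\ transitive_rel T.

Definition is_id_rel (T : L -> L -> Prop) : Prop := forall x y, T x y <-> x = y.
Definition is_full_rel (T : L -> L -> Prop) : Prop := forall x y, T x y.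

Definition simple_lattice : Prop :=
  forall T, congruence T -> is_id_rel T \/ is_full_rel T.

Definition rel_complemented : Prop :=
  forall a b x : L, a <= b -> a <= x -> x <= b ->
    exists y, [/\ a <= y, y <= b, x `&` y = a & x `|` y = b].

Definition aggregation (n : nat) (A : ('I_n -> L) -> L) : Prop :=
  [/\ (forall x y : 'I_n -> L, (forall i, x i <= y i) -> A x <= A y),
      A (fun _ => \bot) = \bot &
      A (fun _ => \top) = \top].

Inductive lterm (n : nat) : Type :=
  | LVar of 'I_n
  | LConst of L
  | LJoin of lterm n & lterm n
  | LMeet of lterm n & lterm n.

Fixpoint leval (n : nat) (t : lterm n) (x : 'I_n -> L) : L :=
  match t with
  | LVar i => x i
  | LConst c => c
  | LJoin t1 t2 => leval t1 x `|` leval t2 x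
  | LMeet t1 t2 => leval t1 x `&` leval t2 x
  end.

Definition polynomial (n : nat) (A : ('I_n -> L) -> L) : Prop :=
  exists t : lterm n, forall x, A x = leval t x.

Definition pol01 (n : nat) (A : ('I_n -> L) -> L) : Prop :=
  [/\ polynomial A, A (fun _ => \bot) = \bot & A (fun _ => \top) = \top].

End LatticeDefs.

(* In a relatively complemented lattice a tolerance that links u <= v and v <= w
   also links u and w: join the first pair with a relative complement d of v in
   [u, w] and meet the result with the second pair.  From T x y and T y z one
   gets T y' y and T y y'' on the chain y' = x & y & z <= y <= y'' = x | y | z,
   hence T (x & z) (x | z) and then T x z; so every tolerance is a congruence,
   and simplicity leaves only id_L and L^2.
   Applying this to the tolerance generated by a pair a < b yields, for every
   such pair, a binary polynomial p with p(a, a) = 0 and p(b, a) = 1.  Meets of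
   these separators give polynomial threshold functions x |-> [c <= x_i] and
   indicators of principal up-sets of L^n, and an aggregation function A is the
   polynomial  x |-> \join_a (A a & [a <= x]). *)
From mathcomp Require Import all_boot all_order.
Set Implicit Arguments. Unset Strict Implicit. Unset Printing Implicit Defensive.
Import Order.TTheory.
Local Open Scope order_scope.

Section Tolerance.
Context {disp : Order.disp_t} {L : finTBLatticeType disp}.
Variable T : L -> L -> Prop.
Hypothesis tolT : tolerance T.

Lemma tol_refl x : T x x. Proof. by case: tolT. Qed.

Lemma tol_sym x y : T x y -> T y x. Proof. by case: tolT => _ symT _; apply: symT. Qed.

Lemma tol_join a b c d : T a b -> T c d -> T (a `|` c) (b `|` d).
Proof. by case: tolT => _ _ compT /compT h /h []. Qed.

Lemma tol_meet a b c d : T a b -> T c d -> T (a `&` c) (b `&` d).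
Proof. by case: tolT => _ _ compT /compT h /h []. Qed.

Lemma tol_convex a b c d : T a b -> a <= c -> c <= d -> d <= b -> T c d.
Proof.
move=> Tab ac cd db.
have := tol_meet (tol_join Tab (tol_refl c)) (tol_refl d).
by rewrite (join_r ac) (join_l (le_trans cd db)) (meet_l cd) (meet_r db).
Qed.

Lemma tol_of_meet_join x y : T (x `&` y) (x `|` y) -> T x y.
Proof.
move=> Tmj.
have Tx : T x (x `&` y).
  by have := tol_meet (tol_sym Tmj) (tol_refl x); rewrite (meet_r (leUl _ _)) (meet_l (leIl _ _)).
have Ty : T (x `&` y) y.
  by have := tol_meet Tmj (tol_refl y); rewrite (meet_l (leIr _ _)) (meet_r (leUr _ _)).
by have := tol_join Tx Ty; rewrite (join_l (leIl _ _)) (join_r (leIr _ _)).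
Qed.

Hypothesis rcL : rel_complemented (L := L).

Lemma tol_chain u v w : u <= v -> v <= w -> T u v -> T v w -> T u w.
Proof.
move=> uv vw Tuv Tvw.
have [d [ud dw vId vUd]] := rcL (le_trans uv vw) uv vw.
have := tol_meet (tol_join Tuv (tol_refl d)) Tvw.
by rewrite (join_r ud) vUd meetC vId meetxx.
Qed.

Lemma tol_transitive : transitive_rel T.
Proof.
move=> x y z Txy Tyz.
have Tlow : T (x `&` y `&` (z `&` y)) y.
  by have := tol_meet (tol_meet Txy (tol_refl y)) (tol_meet (tol_sym Tyz) (tol_refl y));
     rewrite !meetxx.
have Thigh : T y (y `|` x `|` (y `|` z)).
  by have := tol_join (tol_join (tol_refl y) (tol_sym Txy)) (tol_join (tol_refl y) Tyz);
     rewrite !joinxx.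
have Tchain := tol_chain (le_trans (leIl _ _) (leIr _ _))
                         (le_trans (leUl _ _) (leUl _ _)) Tlow Thigh.
apply: tol_of_meet_join; apply: (tol_convex Tchain).
- exact: leI2 (leIl _ _) (leIl _ _).
- exact: le_trans (leIl _ _) (leUl _ _).
- exact: leU2 (leUr _ _) (leUr _ _).
Qed.

End Tolerance.

Lemma simple_rc_tolerance_trivial {disp : Order.disp_t} {L : finTBLatticeType disp}
    (T : L -> L -> Prop) :
  simple_lattice (L := L) -> rel_complemented (L := L) ->
  tolerance T -> is_id_rel T \/ is_full_rel T.
Proof. by move=> simpL rcL tolT; apply: simpL; split=> //; apply: tol_transitive. Qed.

Section Polynomials.
Context {disp : Order.disp_t} {L : finTBLatticeType disp}.

Fixpoint lsubst m n (t : @lterm disp L m) (s : 'I_m -> @lterm disp L n) : @lterm disp L n :=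
  match t with
  | LVar i => s i
  | LConst c => LConst n c
  | LJoin t1 t2 => LJoin (lsubst t1 s) (lsubst t2 s)
  | LMeet t1 t2 => LMeet (lsubst t1 s) (lsubst t2 s)
  end.

Lemma leval_subst m n (t : @lterm disp L m) (s : 'I_m -> @lterm disp L n) x :
  leval (lsubst t s) x = leval t (fun j => leval (s j) x).
Proof. by elim: t => //= t1 -> t2 ->. Qed.

Lemma eq_leval n (t : @lterm disp L n) x y : x =1 y -> leval t x = leval t y.
Proof. by move=> eqxy; elim: t => //= t1 -> t2 ->. Qed.

Lemma leval_homo n (t : @lterm disp L n) x y : (forall i, x i <= y i) -> leval t x <= leval t y.
Proof. by move=> lexy; elim: t => //= t1 le1 t2 le2; [exact: leU2 | exact: leI2]. Qed.

Definition pair2 (u v : L) : 'I_2 -> L := fun j => if j == ord0 then u else v.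

Context {n : nat}.
Implicit Types f g : ('I_n -> L) -> L.

Lemma polynomial_cst c : polynomial (fun _ : 'I_n -> L => c).
Proof. by exists (LConst n c). Qed.

Lemma polynomial_proj i : polynomial (fun x : 'I_n -> L => x i).
Proof. by exists (LVar i). Qed.

Lemma polynomial_join f g : polynomial f -> polynomial g -> polynomial (fun x => f x `|` g x).
Proof. by move=> [t ft] [u gu]; exists (LJoin t u) => x /=; rewrite ft gu. Qed.

Lemma polynomial_meet f g : polynomial f -> polynomial g -> polynomial (fun x => f x `&` g x).
Proof. by move=> [t ft] [u gu]; exists (LMeet t u) => x /=; rewrite ft gu. Qed.

Lemma eq_polynomial f g : f =1 g -> polynomial f -> polynomial g.
Proof. by move=> eqfg [t ft]; exists t => x; rewrite -eqfg. Qed.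

Lemma polynomial_comp2 (p : @lterm disp L 2) f g : polynomial f -> polynomial g ->
  polynomial (fun x => leval p (pair2 (f x) (g x))).
Proof.
move=> [t ft] [u gu]; exists (lsubst p (fun j => if j == ord0 then t else u)) => x.
by rewrite leval_subst; apply: eq_leval => j; rewrite /pair2; case: (j == ord0).
Qed.

Lemma polynomial_joins (I : Type) (r : seq I) (F : I -> ('I_n -> L) -> L) :
  (forall i, polynomial (F i)) -> polynomial (fun x => \join_(i <- r) F i x).
Proof.
move=> polyF; elim: r => [|i r IHr].
  by apply: eq_polynomial (polynomial_cst \bot) => x; rewrite big_nil.
by apply: eq_polynomial (polynomial_join (polyF i) IHr) => x; rewrite big_cons.
Qed.

Lemma pol01_aggregation (A : ('I_n -> L) -> L) : pol01 A -> aggregation A.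
Proof. by case=> [[t At] A0 A1]; split=> // x y lexy; rewrite !At; apply: leval_homo. Qed.

End Polynomials.

Lemma meet_closed_vanishing {disp : Order.disp_t} {L : finTBLatticeType disp}
    (Y : Type) (I : eqType) (P : (Y -> L) -> Prop) (Z : I -> Y -> Prop) (r : seq I) :
  P (fun _ => \top) -> (forall f g, P f -> P g -> P (fun y => f y `&` g y)) ->
  (forall i, i \in r -> exists2 f, P f & forall y, Z i y -> f y = \bot) ->
  exists2 f, P f & forall i y, i \in r -> Z i y -> f y = \bot.
Proof.
move=> Ptop Pmeet; elim: r => [|i r IHr] vanish; first by exists (fun _ => \top).
have [g Pg gi] := vanish i (mem_head i r).
have [f Pf fr] := IHr (fun j jr => vanish j (mem_behead (s := i :: r) jr)).
exists (fun y => g y `&` f y) => [|j y]; first exact: Pmeet.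
rewrite in_cons => /orP[/eqP-> /gi-> | /fr h /h->]; [exact: meet0x | exact: meetx0].
Qed.

Section SimpleRelativelyComplemented.
Context {disp : Order.disp_t} {L : finTBLatticeType disp}.
Hypothesis simpL : simple_lattice (L := L).
Hypothesis rcL : rel_complemented (L := L).

Definition gen_tolerance (a b x y : L) : Prop :=
  exists p : @lterm disp L 2, x = leval p (pair2 a b) /\ y = leval p (pair2 b a).

Lemma gen_tolerance_tolerance a b : tolerance (gen_tolerance a b).
Proof.
split.
- by move=> x; exists (LConst 2 x).
- move=> x y [p [-> ->]].
  exists (lsubst p (fun j => if j == ord0 then LVar ord_max else LVar ord0)).
  by rewrite !leval_subst; split; apply: eq_leval => j; rewrite /pair2; case: (j == ord0).
- by move=> x y u v [p [-> ->]] [q [-> ->]]; split; [exists (LJoin p q) | exists (LMeet p q)].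
Qed.

Lemma separating_term a b : a < b ->
  exists p : @lterm disp L 2, leval p (pair2 a a) = \bot /\ leval p (pair2 b a) = \top.
Proof.
move=> ltab.
have [idT | fullT] := simple_rc_tolerance_trivial simpL rcL (gen_tolerance_tolerance a b).
  have /idT eqab : gen_tolerance a b a b by exists (LVar ord0).
  by rewrite eqab ltxx in ltab.
have [p [p_bot p_top]] := fullT \bot \top.
exists p; split=> //; apply/eqP; rewrite -lex0 p_bot; apply: leval_homo => j.
by rewrite /pair2; case: (j == ord0) => //; exact: ltW.
Qed.

Variable n : nat.

Lemma polynomial_threshold c (i : 'I_n) :
  polynomial (fun x : 'I_n -> L => if c <= x i then \top else \bot).
Proof.
pose P f := polynomial f /\ forall x : 'I_n -> L, c <= x i -> f x = \top.
have [f [polyf f_top] f_bot] : exists2 f, P f & forall t x,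
    t \in [seq t <- enum L | ~~ (c <= t)] -> x i = t -> f x = \bot.
  apply: meet_closed_vanishing.
- by split=> //; exact: polynomial_cst.
- by move=> f g [pf ft] [pg gt]; split=> [|x cx]; [exact: polynomial_meet | rewrite ft ?gt ?meetxx].
- move=> t; rewrite mem_filter => /andP[nct _].
  have [|p [p_bot p_top]] := separating_term (a := c `&` t) (b := c).
    by rewrite lt_neqAle leIl andbT; apply: contra nct => /eqP/meet_idPl.
  exists (fun x => leval p (pair2 (x i `&` c) (c `&` t))).
    split=> [|x cx]; last by rewrite (meet_r cx).
    exact: polynomial_comp2 (polynomial_meet (polynomial_proj i) (polynomial_cst c))
                            (polynomial_cst (c `&` t)).
  by move=> x ->; rewrite meetC.
- apply: eq_polynomial polyf => x; case: ifP => [/f_top // | nc].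
  by apply: (f_bot (x i)) => //; rewrite mem_filter nc mem_enum.
Qed.

Definition upset_indicator (a x : 'I_n -> L) : L :=
  if [forall i, a i <= x i] then \top else \bot.

Lemma polynomial_upset_indicator a : polynomial (upset_indicator a).
Proof.
pose P f := polynomial f /\ forall x : 'I_n -> L, (forall i, a i <= x i) -> f x = \top.
have [f [polyf f_top] f_bot] : exists2 f, P f &
    forall i x, i \in enum 'I_n -> ~~ (a i <= x i) -> f x = \bot.
  apply: meet_closed_vanishing.
- by split=> //; exact: polynomial_cst.
- by move=> f g [pf ft] [pg gt]; split=> [|x ax]; [exact: polynomial_meet | rewrite ft ?gt ?meetxx].
- move=> i _; exists (fun x => if a i <= x i then \top else \bot).
    by split=> [|x ->]; first exact: polynomial_threshold.
  by move=> x /negbTE->.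
- apply: eq_polynomial polyf => x; rewrite /upset_indicator.
  case: ifP => [/forallP/f_top // | /negbT/forallPn[i nai]].
  exact: (f_bot i) (mem_enum _ i) nai.
Qed.

Lemma aggregation_polynomial (A : ('I_n -> L) -> L) : aggregation A -> polynomial A.
Proof.
case=> homoA _ _.
have A_joins x : A x = \join_(a : {ffun 'I_n -> L}) (A a `&` upset_indicator a x).
  apply/le_anti/andP; split.
    apply: (joins_min (j := finfun x)) => //.
    have -> : upset_indicator (finfun x) x = \top.
      by rewrite /upset_indicator; case: forallP => // -[] i; rewrite ffunE.
    by rewrite meetx1; apply: homoA => i; rewrite ffunE.
  apply/joinsP => a _; rewrite /upset_indicator; case: forallP => [ax | _].
    by rewrite meetx1; apply: homoA.
  by rewrite meetx0 le0x.
apply: eq_polynomial (polynomial_joins _ _) => [x | a]; first by rewrite A_joins.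
exact: polynomial_meet (polynomial_cst (A a)) (polynomial_upset_indicator a).
Qed.

End SimpleRelativelyComplemented.

Theorem mainTheorem6 (disp : Order.disp_t) (L : finTBLatticeType disp) :
  @simple_lattice disp L -> @rel_complemented disp L ->
  [/\ (forall T : L -> L -> Prop, tolerance T -> transitive_rel T),
      (forall T : L -> L -> Prop, tolerance T -> is_id_rel T \/ is_full_rel T) &
      (forall (n : nat) (A : ('I_n -> L) -> L), (0 < n)%N ->
         (aggregation A <-> pol01 A))].
Proof.
move=> simpL rcL; split.
- by move=> T tolT; apply: tol_transitive.
- by move=> T; apply: simple_rc_tolerance_trivial.
- move=> n A _; split; last exact: pol01_aggregation.
  by move=> aggA; case: (aggA) => _ A0 A1; split=> //; apply: aggregation_polynomial.
Qed.
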